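(* For every integer $n\ge 1$ and every integer $i$ with $0\le i\le n$, there exists a cyclic two-fold triple system CTS$(6n+1,2)$ with fine structure $(c_1,c_2)=(2n-2i,\,i)$.
   Context: A cyclic $\lambda$-fold triple system CTS$(v,\lambda)$ is a multiset $\mathcal B$ of 3-element subsets (blocks) of $\mathbb Z_v$ such that every 2-element subset of $\mathbb Z_v$ is contained in exactly $\lambda$ blocks (counted with multiplicity), and $\mathcal B$ is invariant under the translation $x\mapsto x+1$ (a block and its translate have the same multiplicity). Thus $\mathcal B$ is a union of translation orbits of 3-subsets, each taken with some multiplicity; a base block is a representative of such an orbit. The fine structure of a CTS$(v,\lambda)$ is the vector $(c_1,\ldots,c_\lambda)$, where $c_i$ is the number of distinct base blocks (orbits) occurring with multiplicity exactly $i$. *)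

(* Z_v is modelled as 'I_v with translation x |-> x+1 mod v (ordS). *)
From mathcomp Require Import all_boot.
Set Implicit Arguments. Unset Strict Implicit. Unset Printing Implicit Defensive.

Definition trs (v : nat) (B : {set 'I_v}) : {set 'I_v} := [set ordS x | x in B].

Definition orb (v : nat) (B : {set 'I_v}) : {set {set 'I_v}} :=
  [set iter k (@trs v) B | k : 'I_v].

(* A multiset of blocks is given by its multiplicity function m.
   is_CTS v lam m : m is a cyclic lam-fold triple system CTS(v,lam). *)
Definition is_CTS (v lam : nat) (m : {set 'I_v} -> nat) : Prop :=
  [/\ (forall B, 0 < m B -> #|B| = 3),
      (forall P : {set 'I_v}, #|P| = 2 -> \sum_(B : {set 'I_v} | P \subset B) m B = lam)
    & (forall B, m (trs B) = m B)].

Definition fine (v : nat) (m : {set 'I_v} -> nat) (i : nat) : nat :=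
  #|[set orb B | B : {set 'I_v} & m B == i]|.

(* Take a Skolem-type sequence a of order n (given explicitly for each residue of n mod 4),
   so that with x_j = a_(j+1) + n the triples {j+1, x_j, j+1+x_j} (j < n) and their
   negatives partition Z_v \ {0}, v = 6n+1.
   The base blocks {0, j+1, j+1+x_j} and {0, x_j, x_j+j+1} have the same differences
   ±(j+1), ±x_j, ±(j+1+x_j), so taking the first one twice and the second not at all for
   j < i, and each once for j >= i, covers every nonzero difference exactly twice: the
   development is a CTS(v,2).  Distinct base blocks lie in distinct orbits (a difference
   count separates indices, a translate of {0, j+1, j+1+x_j} separates the two blocks of
   an index) and have trivial stabilisers since 3 does not divide v, so the orbits of
   multiplicity 1 and 2 are counted directly: 2(n-i) and i. *)

From mathcomp Require Import all_boot all_algebra zify.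
Set Implicit Arguments. Unset Strict Implicit. Unset Printing Implicit Defensive.
Import GRing.Theory.

(* With x_j = a j + n and y_j = a j + j + n, the triples {j, x_j, y_j} (1 <= j <= n)
   together with their negatives partition the nonzero residues modulo 6n+1:
   the pairs (a j, a j + j) are disjoint, and the sums 4n+1 are excluded because
   they would make one of x_j, y_j the negative of some x_k or y_k. *)
Definition skolem_type (n : nat) (a : nat -> nat) : Prop :=
  forall j k, 1 <= j <= n -> 1 <= k <= n ->
  [/\ 1 <= a j, a j + j <= 2 * n + 1,
      (a j = a k -> j = k) /\ (a j + j = a k + k -> j = k), a j <> a k + k &
      [/\ a j + a k <> 4 * n + 1, a j + (a k + k) <> 4 * n + 1
        & (a j + j) + (a k + k) <> 4 * n + 1]].

Definition skolem_4s s j :=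
  if j %% 2 == 0 then 6 * s - j %/ 2
  else if j == 1 then s else if j == 2 * s - 1 then 2 * s
  else if j == 4 * s - 1 then 2 * s + 1
  else if j <= 2 * s - 3 then 2 * s - j %/ 2 else 2 * s - 1 - j %/ 2.

Definition skolem_4s1 s j :=
  if j %% 2 == 0 then 6 * s + 2 - j %/ 2
  else if j == 1 then s + 1 else if j == 4 * s + 1 then 2 * s + 1
  else if j == 2 * s - 1 then 2 * s + 2
  else if j <= 2 * s - 3 then 2 * s + 1 - j %/ 2 else 2 * s - j %/ 2.

Definition skolem_4s2 s j :=
  if j %% 2 == 1 then
    (if j == 1 then 3 * s + 1 else if j == 3 then 6 * s + 1 else 6 * s + 2 - j %/ 2)
  else if j == 4 * s + 2 then 2 * s else if j == 2 * s + 2 then 6 * s + 3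
  else if j <= 2 * s then 2 * s - j %/ 2 else 2 * s + 1 - j %/ 2.

Definition skolem_4s3 s j :=
  if j %% 2 == 0 then (if j == 2 then 8 * s + 5 else 6 * s + 2 - j %/ 2)
  else if j == 1 then 3 * s else if j == 2 * s + 1 then 6 * s + 3
  else if j == 4 * s + 1 then 2 * s else if j == 4 * s + 3 then 2 * s - 1
  else if j <= 2 * s - 1 then 2 * s - 1 - j %/ 2 else 2 * s - j %/ 2.

Ltac solve_skolem_family j k :=
  move: (divn_eq j 2) (ltn_pmod j (isT : 0 < 2)) (divn_eq k 2) (ltn_pmod k (isT : 0 < 2));
  move: (j %/ 2) (j %% 2) (k %/ 2) (k %% 2) => u r u' r' j_eq r_lt k_eq r'_lt;
  repeat case: ifP => ?; split; try split; try split; lia.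

Lemma skolem_type_4s s : 1 <= s -> skolem_type (4 * s) (skolem_4s s).
Proof. move=> hs j k hj hk; rewrite /skolem_4s; solve_skolem_family j k. Qed.

Lemma skolem_type_4s1 s : 2 <= s -> skolem_type (4 * s + 1) (skolem_4s1 s).
Proof. move=> hs j k hj hk; rewrite /skolem_4s1; solve_skolem_family j k. Qed.

Lemma skolem_type_4s2 s : 1 <= s -> skolem_type (4 * s + 2) (skolem_4s2 s).
Proof. move=> hs j k hj hk; rewrite /skolem_4s2; solve_skolem_family j k. Qed.

Lemma skolem_type_4s3 s : 1 <= s -> skolem_type (4 * s + 3) (skolem_4s3 s).
Proof. move=> hs j k hj hk; rewrite /skolem_4s3; solve_skolem_family j k. Qed.

Ltac solve_skolem_small :=
  move=> [|[|[|[|[|[|j]]]]]] [|[|[|[|[|[|k]]]]]] hj hk //=; try lia;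
  split; try split; try split; lia.

Lemma skolem_type_exists n : 0 < n -> exists a, skolem_type n a.
Proof.
rewrite (divn_eq n 4) mulnC; have : n %% 4 < 4 by rewrite ltn_pmod.
case: (n %/ 4) (n %% 4) => [|s] [|[|[|[|//]]]] //= _ _.
- by exists (nth 0 [:: 0; 1]); solve_skolem_small.
- by exists (nth 0 [:: 0; 1; 3]); solve_skolem_small.
- by exists (nth 0 [:: 0; 2; 5; 1]); solve_skolem_small.
- by exists (skolem_4s s.+1); rewrite addn0; apply: skolem_type_4s.
- case: s => [|s]; first by exists (nth 0 [:: 0; 1; 4; 7; 5; 3]); solve_skolem_small.
  by exists (skolem_4s1 s.+2); apply: skolem_type_4s1.
- by exists (skolem_4s2 s.+1); apply: skolem_type_4s2.
- by exists (skolem_4s3 s.+1); apply: skolem_type_4s3.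
Qed.

Section NatZp.
Variable p' : nat.
Local Notation v := p'.+1.
Local Notation T := 'I_v.

Lemma inZp_eq x y : x < v -> y < v -> (inZp x == inZp y :> T) = (x == y).
Proof.
move=> x_lt y_lt; apply/eqP/eqP => [/(congr1 val) /=|-> //].
by rewrite !modn_small.
Qed.

Lemma inZp0 : (0%R : T) = inZp 0.
Proof. by apply: val_inj; rewrite /= mod0n. Qed.

Lemma inZpD x y : (inZp (x + y) : T) = (inZp x + inZp y)%R.
Proof. by apply: val_inj; rewrite /= modnDm. Qed.

Lemma inZpB x y : y <= x -> ((inZp x : T) - inZp y)%R = inZp (x - y).
Proof. by move=> yx; apply/eqP; rewrite subr_eq -inZpD subnK. Qed.

Lemma inZpN x : 0 < x < v -> (- (inZp x : T))%R = inZp (v - x).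
Proof.
move=> /andP [x_gt0 x_lt]; apply/eqP; rewrite eq_sym -subr_eq0 opprK -inZpD subnK ?(ltnW x_lt) //.
by apply/eqP; apply: val_inj; rewrite /= modnn.
Qed.

End NatZp.

Section Translates.
Variable p' : nat.
Local Notation v := p'.+1.
Local Notation T := 'I_v.
Local Open Scope ring_scope.
Implicit Types (B C : {set T}) (al be s t x : T).

Definition transl (B : {set T}) (t : T) : {set T} := [set x + t | x in B].

Lemma mem_transl B t x : (x \in transl B t) = (x - t \in B).
Proof.
apply/imsetP/idP => [[y yB ->]|xB]; first by rewrite addrK.
by exists (x - t) => //; rewrite subrK.
Qed.

Lemma transl0 B : transl B 0 = B.
Proof. by apply/setP => x; rewrite mem_transl subr0. Qed.

Lemma translD B s t : transl (transl B s) t = transl B (s + t).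
Proof. by apply/setP => x; rewrite !mem_transl opprD addrA [in RHS]addrAC. Qed.

Lemma translK B t : transl (transl B t) (- t) = B.
Proof. by rewrite translD subrr transl0. Qed.

Lemma eq_transl2 B C t : (transl B t == transl C t) = (B == C).
Proof. by apply/eqP/eqP => [/(congr1 (transl ^~ (- t)))|->]; rewrite ?translK. Qed.

Lemma card_transl B t : #|transl B t| = #|B|.
Proof. by rewrite card_imset //; apply: addIr. Qed.

(* Summing the elements of B gives 3 t = 0. *)
Lemma transl_triple_fixed B t :
  coprime 3 v -> #|B| = 3%N -> transl B t = B -> t = 0.
Proof.
move=> co3 B3 tBB.
have : \sum_(x in transl B t) x = \sum_(x in B) x by rewrite tBB.
rewrite big_imset /=; last by move=> x y _ _; apply: addIr.
rewrite big_split /= sumr_const B3 -[RHS]addr0 => /addrI.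
rewrite Zp_mulrn => /(f_equal val) /= /eqP.
rewrite -/(dvdn v (t * 3)) Gauss_dvdl 1?coprime_sym // => v_dvd_t.
apply: val_inj; case: (posnP t) => //= t_gt0.
by have := dvdn_leq t_gt0 v_dvd_t; rewrite leqNgt ltn_ord.
Qed.

Lemma trs_transl B : (1 < v)%N -> trs B = transl B (inZp 1).
Proof.
move=> v_gt1; apply: eq_imset => x.
by apply: val_inj; rewrite /= (modn_small v_gt1) addn1.
Qed.

Lemma orbE B : (1 < v)%N -> orb B = [set transl B t | t : T].
Proof.
move=> v_gt1; rewrite /orb; apply: eq_imset => k.
have -> : iter k (@trs v) B = transl B (inZp 1 *+ k).
  elim: (nat_of_ord k) => [|l IH]; first by rewrite mulr0n transl0.
  by rewrite iterS IH trs_transl // translD mulrSr.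
by rewrite Zp_mulrn; congr transl; apply: val_inj; rewrite /= (modn_small v_gt1) mul1n modn_small.
Qed.

Lemma orb_transl B t : (1 < v)%N -> orb (transl B t) = orb B.
Proof.
move=> v_gt1; rewrite !orbE //; apply/setP => C.
apply/imsetP/imsetP => [[s _ ->]|[s _ ->]]; first by exists (t + s); rewrite ?translD.
by exists (s - t); rewrite // translD addrC subrK.
Qed.

(* The number of ordered pairs of elements of B with difference d is
   [shift_count d d B]; the general form also detects patterns {z, z+al, z+be}. *)
Definition shift_count (al be : T) (B : {set T}) : nat :=
  (\sum_(z : T) [&& z \in B, (z + al)%R \in B & (z + be)%R \in B])%N.

Lemma shift_count_transl al be B t : shift_count al be (transl B t) = shift_count al be B.
Proof.
rewrite /shift_count (reindex_inj (addIr t)) /=; apply: eq_bigr => z _.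
by rewrite !mem_transl addrK !(addrAC z t) !addrK.
Qed.

Lemma mem3_addr w x y z d : x != y -> x != z -> y != z ->
  (w + d \in [set x; y; z]) =
  (((x - w)%R == d) + ((y - w)%R == d) + ((z - w)%R == d))%N :> nat.
Proof.
move=> xy xz yz; have eq_sub u : (w + d == u) = (u - w == d).
  by rewrite subr_eq addrC eq_sym.
rewrite !inE !eq_sub.
have [ex|_] := eqVneq (x - w) d; have [ey|_] := eqVneq (y - w) d;
  have [ez|_] := eqVneq (z - w) d; rewrite //=; exfalso;
  first [ move/eqP: xy; apply; apply: (addIr (- w)); by rewrite ex ey
        | move/eqP: xz; apply; apply: (addIr (- w)); by rewrite ex ez
        | move/eqP: yz; apply; apply: (addIr (- w)); by rewrite ey ez ].
Qed.

Lemma shift_count3 x y z d : x != y -> x != z -> y != z ->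
  shift_count d d [set x; y; z] =
  (((x - x)%R == d) + ((y - x)%R == d) + ((z - x)%R == d)
   + (((x - y)%R == d) + ((y - y)%R == d) + ((z - y)%R == d)
   + (((x - z)%R == d) + ((y - z)%R == d) + ((z - z)%R == d))))%N.
Proof.
move=> xy xz yz; rewrite /shift_count.
rewrite (eq_bigr (fun w => if w \in [set x; y; z] then nat_of_bool (w + d \in [set x; y; z]) else 0%N));
  last by move=> w _; rewrite andbb; case: (w \in _).
rewrite -big_mkcond /= (eq_bigl (mem (x |: (y |: [set z])))); last by move=> i; rewrite !inE orbA.
rewrite big_setU1 /=; last by rewrite !inE negb_or xy xz.
rewrite big_setU1 /=; last by rewrite !inE yz.
by rewrite big_set1 !mem3_addr.
Qed.

Lemma shift_count_0_u_uw u w d : (0 < u)%N -> (0 < w)%N -> (u + w < v)%N -> d != 0 ->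
  shift_count d d [set 0; inZp u; inZp (u + w)] =
  ((inZp u == d) + (inZp w == d) + (inZp (u + w) == d)
   + (inZp (v - u) == d) + (inZp (v - w) == d) + (inZp (v - (u + w)) == d))%N.
Proof.
move=> u_gt0 w_gt0 uw_lt d_neq0.
have u_lt : (u < v)%N by lia.
rewrite shift_count3; first last.
- by rewrite inZp_eq //; lia.
- by rewrite inZp0 inZp_eq //; lia.
- by rewrite inZp0 inZp_eq //; lia.
have uwu : inZp (u + w) - inZp u = inZp w :> T by rewrite inZpB ?leq_addr // addKn.
have uuw : inZp u - inZp (u + w) = inZp (v - w) :> T by rewrite -opprB uwu inZpN //; lia.
rewrite !subrr (eq_sym 0 d) (negbTE d_neq0) !subr0 !sub0r uwu uuw !inZpN; [|lia..].
by move: (inZp u == d) (inZp w == d) (inZp (u + w) == d)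
  (inZp (v - u) == d) (inZp (v - w) == d) (inZp (v - (u + w)) == d) => [] [] [] [] [] [].
Qed.

Section Development.
Variables (I : finType) (base : I -> {set T}) (mult : I -> nat).

Definition develop B : nat :=
  (\sum_(i : I) mult i * \sum_(t : T) (B == transl (base i) t))%N.

Lemma develop_trs B : (1 < v)%N -> develop (trs B) = develop B.
Proof.
move=> v_gt1; rewrite /develop trs_transl //; apply: eq_bigr => i _; congr (_ * _)%N.
rewrite (reindex_inj (addIr (inZp 1))) /=; apply: eq_bigr => t _.
by rewrite -translD eq_transl2.
Qed.

Lemma develop_pair_count x y :
  (\sum_(B : {set T} | [set x; y] \subset B) develop B =
   \sum_(i : I) mult i * shift_count (y - x)%R (y - x)%R (base i))%N.
Proof.
rewrite /develop exchange_big /=; apply: eq_bigr => i _.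
rewrite -big_distrr /=; congr (_ * _)%N; rewrite exchange_big /=.
have pick_block C :
    (\sum_(B : {set T} | [set x; y] \subset B) (B == C) = ([set x; y] \subset C))%N.
  rewrite big_mkcond (bigD1 C) //= eqxx big1 ?addn0 => [|B /negbTE ->]; last exact: if_same.
  by case: (_ \subset C).
rewrite (eq_bigr _ (fun t _ => pick_block _)) /shift_count.
rewrite (reindex_inj (h := fun z => x - z)) /=; last by move=> ? ? /addrI /oppr_inj.
apply: eq_bigr => t _.
by rewrite subUset !sub1set !mem_transl subKr andbb opprB addrCA.
Qed.

Hypothesis v_gt1 : (1 < v)%N.
Hypothesis co3 : coprime 3 v.
Hypothesis card_base : forall i, #|base i| = 3%N.
Hypothesis base_orbit_inj : forall i j t, transl (base i) t = base j -> i = j.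

Lemma develop_transl i t : develop (transl (base i) t) = mult i.
Proof.
rewrite /develop (bigD1 i) //= [X in (_ + X)%N]big1 => [|j ji]; last first.
  rewrite big1 ?muln0 // => s _; apply/eqP; rewrite eqb0; apply/eqP => ijs.
  by move/eqP: ji; apply; apply: (@base_orbit_inj j i (s - t)); rewrite -translD -ijs translK.
rewrite addn0 (bigD1 t) //= eqxx [X in (_ + X)%N]big1 ?addn0 ?muln1 // => s st.
apply/eqP; rewrite eqb0; apply/eqP => tst; move/eqP: st; apply.
apply/eqP; rewrite -subr_eq0; apply/eqP/(transl_triple_fixed co3 (card_base i)).
by rewrite -translD -tst translK.
Qed.

Lemma developP B : (exists i t, B = transl (base i) t) \/ develop B = 0%N.
Proof.
case: (pickP (fun p : I * T => B == transl (base p.1) p.2)) => [[i t] /eqP ->|none].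
  by left; exists i, t.
right; rewrite /develop big1 // => i _; rewrite big1 ?muln0 // => t _.
by have /= -> := none (i, t).
Qed.

Lemma fine_develop c : (0 < c)%N -> fine develop c = #|[set i | mult i == c]|.
Proof.
move=> c_gt0; rewrite /fine.
have -> : [set orb B | B : {set T} & develop B == c] =
          [set orb (base i) | i in [set i | mult i == c]].
  apply/setP => O; apply/imsetP/imsetP => [[B]|[i]]; rewrite inE => hc ->.
    have [[i [t eB]]|dB0] := developP B; last by move: hc; rewrite dB0 eq_sym; case: c c_gt0.
    by subst B; exists i; [rewrite inE -(develop_transl i t) | rewrite orb_transl].
  by exists (base i); rewrite // inE -{1}(transl0 (base i)) develop_transl.
rewrite card_in_imset // => i j _ _ orb_ij.
have : base j \in orb (base i) by rewrite orb_ij orbE //; apply/imsetP; exists 0; rewrite ?transl0.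
by rewrite orbE // => /imsetP [t _ /esym /base_orbit_inj].
Qed.

Lemma develop_CTS lam :
  (forall d : T, d != 0 -> (\sum_(i : I) mult i * shift_count d d (base i))%N = lam) ->
  is_CTS lam develop.
Proof.
move=> cover; split.
- by move=> B; have [[i [t ->]] _|-> //] := developP B; rewrite card_transl.
- move=> P /eqP /cards2P [x [y [xy ->]]].
  by rewrite develop_pair_count cover // subr_eq0 eq_sym.
- by move=> B; rewrite develop_trs.
Qed.

End Development.
End Translates.

Section HeffterBlocks.
Variables (n : nat) (a : nat -> nat).
Hypothesis skolem_a : skolem_type n a.
Local Notation v := (6 * n).+1.
Local Notation T := 'I_v.

(* x_(j+1) in the notation of [skolem_type], for the 0-based index j < n. *)
Definition hx j := a j.+1 + n.

Lemma hx_bounds j : j < n ->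
  [/\ j.+1 < hx j, j.+1 + hx j < v, hx j + (j.+1 + hx j) < v & j.+1 + (j.+1 + hx j) < v].
Proof.
move=> j_lt; have [a_gt0 a_le _ _ [_ a_ne _]] := skolem_a (j := j.+1) (k := j.+1) (ltac:(lia)) (ltac:(lia)).
rewrite /hx; split; lia.
Qed.

Definition diff_val j s :=
  nth 0 [:: j.+1; hx j; j.+1 + hx j; v - j.+1; v - hx j; v - (j.+1 + hx j)] s.

Lemma diff_val_bounds j s : j < n -> s < 6 -> 0 < diff_val j s < v.
Proof.
move=> j_lt; have [? ? _ _] := hx_bounds j_lt.
by case: s => [|[|[|[|[|[|//]]]]]] _; rewrite /diff_val /=; lia.
Qed.

Lemma diff_val_inj j k s t : j < n -> k < n -> s < 6 -> t < 6 ->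
  diff_val j s = diff_val k t -> j = k /\ s = t.
Proof.
move=> j_lt k_lt s_lt t_lt.
have [h1 h2 [h3 h4] h5 [h6 h7 h8]] := skolem_a (j := j.+1) (k := k.+1) (ltac:(lia)) (ltac:(lia)).
have [g1 g2 _ g5 [g6 g7 g8]] := skolem_a (j := k.+1) (k := j.+1) (ltac:(lia)) (ltac:(lia)).
have [jk|jk] := eqVneq j k.
  subst k; clear h3 h4; case: s s_lt => [|[|[|[|[|[|//]]]]]] _;
  case: t t_lt => [|[|[|[|[|[|//]]]]]] _; rewrite /diff_val /hx /=; lia.
have a_ne : a j.+1 <> a k.+1 by move/h3; lia.
have a_add_ne : a j.+1 + j.+1 <> a k.+1 + k.+1 by move/h4; lia.
clear h3 h4; case: s s_lt => [|[|[|[|[|[|//]]]]]] _;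
case: t t_lt => [|[|[|[|[|[|//]]]]]] _; rewrite /diff_val /hx /=; lia.
Qed.

Definition diff (x : 'I_n * 'I_6) : T := inZp (diff_val x.1 x.2).

Lemma diff_inj : injective diff.
Proof.
move=> [j s] [k t] /eqP; rewrite /diff /= inZp_eq; last 2 first.
- by case/andP: (diff_val_bounds (ltn_ord j) (ltn_ord s)).
- by case/andP: (diff_val_bounds (ltn_ord k) (ltn_ord t)).
move=> /eqP /(diff_val_inj (ltn_ord j) (ltn_ord k) (ltn_ord s) (ltn_ord t)) [jk st].
by congr pair; apply: val_inj.
Qed.

(* The 6n differences are distinct and nonzero, hence they are all of Z_v \ {0}. *)
Lemma diff_count1 (d : T) : d != 0%R -> \sum_(x : 'I_n * 'I_6) (diff x == d) = 1.
Proof.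
move=> d_neq0.
have diff_neq0 : [set diff x | x in setT] \subset [set~ 0%R].
  apply/subsetP => _ /imsetP [[j s] _ ->]; rewrite !inE /diff inZp0 inZp_eq //=.
    by case/andP: (diff_val_bounds (ltn_ord j) (ltn_ord s)); rewrite lt0n.
  by case/andP: (diff_val_bounds (ltn_ord j) (ltn_ord s)).
have im_diff : [set diff x | x in setT] = [set~ 0%R].
  apply/eqP; rewrite eqEcard diff_neq0 cardsC1 card_imset; last exact: diff_inj.
  by rewrite cardsT card_prod !card_ord mulnC /= leqnn.
have : d \in [set diff x | x in setT] by rewrite im_diff !inE.
case/imsetP => x0 _ ->.
rewrite (bigD1 x0) //= eqxx big1 // => x /negbTE.
by rewrite (inj_eq diff_inj) => ->.
Qed.

Definition block (x : 'I_n * bool) : {set T} :=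
  let j := nat_of_ord x.1 in
  if x.2 then [set 0%R; inZp (hx j); inZp (hx j + j.+1)]
  else [set 0%R; inZp j.+1; inZp (j.+1 + hx j)].

Lemma card_block (x : 'I_n * bool) : #|block x| = 3.
Proof.
have [? ? _ _] := hx_bounds (ltn_ord x.1).
by rewrite /block; case: x.2; rewrite -setUA cardsU1 cards2 !inE inZp0 !inZp_eq //; lia.
Qed.

Lemma shift_count_block (x : 'I_n * bool) (d : T) : d != 0%R ->
  shift_count d d (block x) = \sum_(s < 6) (diff (x.1, s) == d).
Proof.
move=> d_neq0; have [? ? _ _] := hx_bounds (ltn_ord x.1).
rewrite !big_ord_recl big_ord0 /diff /diff_val /= addn0 /block.
case: x.2; rewrite shift_count_0_u_uw //; try lia; rewrite ?(addnC (hx _)).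
by move: (inZp _ == d) (inZp (hx _) == d) (inZp (_.+1 + _) == d)
  (inZp (_ - _.+1) == d) (inZp (_ - hx _) == d) (inZp (_ - (_ + _)) == d) => [] [] [] [] [] [].
Qed.

(* A translate of {0, j+1, j+1+x_j} lies in the first block of index j but not in the second. *)
Lemma shift_count_block_pos (x : 'I_n * bool) :
  (0 < shift_count (inZp x.1.+1) (inZp (x.1.+1 + hx x.1)) (block x)) = ~~ x.2.
Proof.
have [? ? ? ?] := hx_bounds (ltn_ord x.1).
rewrite /shift_count /block; case: x.2 => /=; last first.
  by rewrite (bigD1 0%R) //= !add0r !inE !eqxx !orbT.
rewrite big1 // => z _; apply/eqP; rewrite eqb0.
apply/negP => /and3P [zB e1 e2]; move: zB; rewrite !inE -!orbA => /or3P [] /eqP zE;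
  rewrite zE in e1 e2;
  first [ move: e1; rewrite !inE ?add0r -?inZpD inZp0 !inZp_eq //; lia
        | move: e2; rewrite !inE ?add0r -?inZpD inZp0 !inZp_eq //; lia ].
Qed.

Lemma sum_diff_count (d : T) : d != 0%R ->
  \sum_(j < n) \sum_(s < 6) (diff (j, s) == d) = 1.
Proof.
by move=> d_neq0; rewrite pair_bigA -[RHS](diff_count1 d_neq0); apply: eq_bigr => -[].
Qed.

Lemma block_transl_inj (x y : 'I_n * bool) t : transl (block x) t = block y -> x = y.
Proof.
move=> e; have sc al be : shift_count al be (block x) = shift_count al be (block y).
  by rewrite -e shift_count_transl.
case: x y {e} sc => j b [k c] sc.
have [jk|jk] := eqVneq j k.
  subst k; congr pair.
  have := shift_count_block_pos (j, b); rewrite /= sc shift_count_block_pos /=.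
  by case: b c {sc} => [] [].
have d_neq0 : inZp j.+1 != 0%R :> T.
  by have [? ? _ _] := hx_bounds (ltn_ord j); rewrite inZp0 inZp_eq //; lia.
have row_j_pos : 0 < \sum_(s < 6) (diff (j, s) == inZp j.+1).
  by rewrite big_ord_recl /diff /diff_val /= eqxx.
have := sc (inZp j.+1) (inZp j.+1); rewrite !shift_count_block //= => rows_eq.
have := sum_diff_count d_neq0; rewrite (bigD1 j) //= (bigD1 k) 1?eq_sym //= -rows_eq.
move: row_j_pos; set r := \sum_(s < 6) _; lia.
Qed.

End HeffterBlocks.

Definition mult (i : nat) {n : nat} (x : 'I_n * bool) : nat :=
  if x.1 < i then (if x.2 then 0 else 2) else 1.

Lemma sum_mult_shift_count n a i : skolem_type n a ->
  forall d : 'I_(6 * n).+1, d != 0%R ->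
  \sum_(x : 'I_n * bool) mult i x * shift_count d d (block a x) = 2.
Proof.
move=> skolem_a d d_neq0.
rewrite -(pair_bigA _ (fun j b => mult i (j, b) * shift_count d d (block a (j, b)))) /=.
transitivity (2 * \sum_(j < n) \sum_(s < 6) (diff a (j, s) == d)); last first.
  by rewrite sum_diff_count.
rewrite big_distrr; apply: eq_bigr => j _.
by rewrite big_bool !shift_count_block //= /mult /=; case: (j < i); lia.
Qed.

Lemma card_mult n i c : #|[set x : 'I_n * bool | mult i x == c]| =
  \sum_(j < n) ((mult i (j, true) == c) + (mult i (j, false) == c)).
Proof.
rewrite -sum1_card big_mkcond /=.
transitivity (\sum_(j < n) \sum_(b : bool) if mult i (j, b) == c then 1 else 0).
  by rewrite pair_bigA; apply: eq_bigr => -[j b] _; rewrite inE.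
by apply: eq_bigr => j _; rewrite big_bool; case: (_ == c); case: (_ == c).
Qed.

Lemma sum_ord_geq n i : \sum_(j < n) (i <= j) = n - i.
Proof.
elim: n => [|n IH]; first by rewrite big_ord0.
by rewrite big_ord_recr /= IH; case: leqP; lia.
Qed.

Lemma sum_ord_ltn n i : \sum_(j < n) (j < i) = minn i n.
Proof.
elim: n => [|n IH]; first by rewrite big_ord0; lia.
by rewrite big_ord_recr /= IH; case: ltnP; lia.
Qed.

Lemma card_mult1 n i : #|[set x : 'I_n * bool | mult i x == 1]| = 2 * (n - i).
Proof.
rewrite card_mult -sum_ord_geq big_distrr; apply: eq_bigr => j _.
by rewrite /mult /=; case: ltnP.
Qed.

Lemma card_mult2 n i : i <= n -> #|[set x : 'I_n * bool | mult i x == 2]| = i.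
Proof.
move=> i_le; rewrite card_mult -[RHS](minn_idPl i_le) -sum_ord_ltn; apply: eq_bigr => j _.
by rewrite /mult /=; case: ltnP.
Qed.

Theorem mainTheorem3 (n i : nat) (hn : 1 <= n) (hi : i <= n) :
  exists m : {set 'I_(6 * n + 1)} -> nat,
    [/\ is_CTS 2 m, fine m 1 = 2 * n - 2 * i & fine m 2 = i].
Proof.
have [a skolem_a] := skolem_type_exists hn.
rewrite addn1.
have v_gt1 : 1 < (6 * n).+1 by lia.
have co3 : coprime 3 (6 * n).+1.
  by rewrite /coprime (_ : (6 * n).+1 = 2 * n * 3 + 1) ?gcdnMDl //; lia.
have card_base := card_block skolem_a.
have base_orbit_inj := block_transl_inj skolem_a.
exists (develop (block a) (mult i)); split.
- exact: develop_CTS (sum_mult_shift_count i skolem_a).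
- by rewrite fine_develop // card_mult1 mulnBr.
- by rewrite fine_develop // card_mult2.
Qed.
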